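(* In the five-machine configuration near a central mass (Fermi normal coordinates about a radial Schwarzschild geodesic with $\mu=GM/(c^2r^3)$, $r$ treated as constant; $B_1,B_2$ symmetric on the $x$-axis, $A_0,A_1,A_2$ equally spaced on a circle in the plane $x=0$; seven two-way channels between $B_j$ and $A_n$ and between $B_1,B_2$ with null phases and one-way transit of $2N$ cycles; the three channels between the $A_n$ with transit $3N$ cycles and common reception phase $\phi$), let $L\approx 2Np_\tau c$ denote the proper radar distance between $B_1$ and $B_2$. If the reception phase $\phi$ of the channels $\overrightarrow{A_nA_{n\pm1}}$ is to satisfy the logical-synchronization requirement $|\phi|<1/2$, then, to first order in curvature, $$p_\tau>\frac{27\,GM\,L^3}{32\,r^3c^3},$$ so that with an alphabet of $b$ bits per character the bit rate of every channel in the cluster is bounded by $b/p_\tau<\dfrac{32\,b\,r^3c^3}{27\,GM\,L^3}$.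
   Context: An open machine is modeled as a smooth future-pointing timelike worldline parametrized by its adjustable clock reading; readings are written $m.\phi$ with integer $m$ and phase $\phi\in(-1/2,1/2]$; a tick occurs at each integer reading and one character is transmitted per cycle. Signals propagate along null geodesics. A channel $\overrightarrow{AB}$ is a set of pairs (transmission $A$-reading, reception $B$-reading). In this configuration, to first order in curvature, the common phase satisfies $\phi=-27GMN^3p_\tau^2/(8r^3)$, where $p_\tau$ is the proper clock period of $B_1$. Logical synchronization demands that every reception phase satisfy $|\phi|<(1-\eta)/2$ for some $\eta>0$. *)

From Stdlib Require Import Reals Lra.
Open Scope R_scope.

(* Common reception phase of the channels A_n -> A_(n+-1), to first order in
   curvature (given in the paper's setup):
   phi = -27 G M N^3 p_tau^2 / (8 r^3), N = half the one-way transit in cycles. *)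
Definition common_phase (G M r : R) (N : nat) (p_tau : R) : R :=
  - (27 * G * M * (INR N) ^ 3 * p_tau ^ 2) / (8 * r ^ 3).

Definition radar_distance (N : nat) (p_tau c : R) : R := 2 * INR N * p_tau * c.

Definition phase_ok (phi : R) : Prop := Rabs phi < 1 / 2.

(* With L = 2 N p_tau c, the quantity 27 G M L^3 / (32 r^3 c^3) is exactly
   2 |phi| p_tau, because phi = -27 G M N^3 p_tau^2 / (8 r^3) is negative.
   Hence |phi| < 1/2 says precisely that it is smaller than p_tau, and the
   bit-rate bound follows by taking reciprocals. *)

From Stdlib Require Import Reals Lra Lia.
Open Scope R_scope.

Lemma common_phase_lt0 (G M r p_tau : R) (N : nat) :
  0 < G -> 0 < M -> 0 < r -> 0 < p_tau -> (0 < N)%nat ->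
  common_phase G M r N p_tau < 0.
Proof.
  intros hG hM hr hp hN.
  assert (hn : 0 < INR N) by (apply lt_0_INR; lia).
  unfold common_phase, Rdiv.
  rewrite Ropp_mult_distr_l_reverse.
  apply Ropp_lt_gt_0_contravar, Rmult_lt_0_compat.
  - repeat apply Rmult_lt_0_compat; try lra; apply pow_lt; lra.
  - apply Rinv_0_lt_compat, Rmult_lt_0_compat; [lra | apply pow_lt; lra].
Qed.

Lemma curvature_delay_radar_distance (G M r c p_tau : R) (N : nat) :
  r <> 0 -> c <> 0 ->
  27 * G * M * radar_distance N p_tau c ^ 3 / (32 * r ^ 3 * c ^ 3)
  = 2 * - common_phase G M r N p_tau * p_tau.
Proof.
  intros hr hc. unfold radar_distance, common_phase.
  field; split; assumption.
Qed.

Lemma Rdiv_lt_contravar_r (a x y : R) : 0 < a -> 0 < x -> x < y -> a / y < a / x.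
Proof.
  intros ha hx hxy. apply Rmult_lt_compat_l; [exact ha |].
  apply Rinv_lt_contravar; [apply Rmult_lt_0_compat |]; lra.
Qed.

Theorem mainTheorem5 (G M r c p_tau : R) (N b : nat)
  (hG : 0 < G) (hM : 0 < M) (hr : 0 < r) (hc : 0 < c) (hp : 0 < p_tau)
  (hN : (0 < N)%nat) (hb : (0 < b)%nat)
  (hphi : phase_ok (common_phase G M r N p_tau)) :
  let L := radar_distance N p_tau c in
  p_tau > 27 * G * M * L ^ 3 / (32 * r ^ 3 * c ^ 3) /\
  INR b / p_tau < 32 * INR b * r ^ 3 * c ^ 3 / (27 * G * M * L ^ 3).
Proof.
  intros L.
  pose proof (common_phase_lt0 G M r p_tau N hG hM hr hp hN) as phi_neg.
  unfold phase_ok in hphi; rewrite Rabs_left in hphi by exact phi_neg.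
  pose proof (curvature_delay_radar_distance G M r c p_tau N
    (Rgt_not_eq _ _ hr) (Rgt_not_eq _ _ hc)) as delay.
  fold L in delay.
  assert (hL : 0 < L).
  { unfold L, radar_distance.
    assert (0 < INR N) by (apply lt_0_INR; lia).
    repeat apply Rmult_lt_0_compat; lra. }
  assert (rate : 32 * INR b * r ^ 3 * c ^ 3 / (27 * G * M * L ^ 3)
                 = INR b / (27 * G * M * L ^ 3 / (32 * r ^ 3 * c ^ 3))).
  { field; repeat split; apply pow_nonzero || idtac; lra. }
  rewrite rate, delay. split.
  - nra.
  - apply Rdiv_lt_contravar_r; [apply lt_0_INR; lia | nra | nra].
Qed.
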